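(* Let $K$ be a field of characteristic zero. For $0\le i\le n$ let $E_i$ denote the injective hull of $K$ over $K[X_1,\ldots,X_i]$ (with $E_0=K$), with its natural module structure over the Weyl algebra $A_i(K)$. Then for each $c=1,\ldots,n$, \[H_i(\partial_c,\partial_{c+1},\ldots,\partial_n;E_n)=\begin{cases}0 & i>0,\\ E_{c-1}& i=0,\end{cases}\] where the isomorphism for $i=0$ is as $A_{c-1}(K)$-modules.
   Context: $E_i=\bigoplus_{r_1,\ldots,r_i\ge0}K\,\frac{1}{X_1\cdots X_iX_1^{r_1}\cdots X_i^{r_i}}$, where $X_j$ lowers $r_j$ by one (giving $0$ if $r_j=0$) and $\partial_j$ sends the basis element with exponent $r_j$ to $(-r_j-1)$ times the basis element with $r_j$ replaced by $r_j+1$. $H_i(\partial_c,\ldots,\partial_n;N)$ is the $i$-th Koszul homology of $N$ with respect to the commuting $K$-linear maps $\partial_c,\ldots,\partial_n$; it is a module over $A_{c-1}(K)=K\langle X_1,\ldots,X_{c-1},\partial_1,\ldots,\partial_{c-1}\rangle$. *)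

From HB Require Import structures.
From mathcomp Require Import all_boot all_order all_algebra.
From mathcomp Require Import mpoly.
Set Implicit Arguments. Unset Strict Implicit. Unset Printing Implicit Defensive.
Import Order.TTheory GRing.Theory.
Local Open Scope ring_scope.

(* Model of E_n (as in the paper's context):
     E_n = (+)_{r in N^n} K * 1/(X_1..X_n X_1^{r_1}..X_n^{r_n}).
   The basis element with exponent vector r is encoded as the monomial 'X_[r]
   of {mpoly K[n]}; so an element of E_n is a finitely supported family of
   coefficients indexed by r : 'X_{1..n}.  E_0 = {mpoly K[0]} = K. *)
Definition Emod (K : fieldType) (n : nat) := {mpoly K[n]}.

(* Variables are 0-indexed: index j (j < n) stands for X_{j+1}, d_{j+1}. *)

Definition mexp (n : nat) (r : 'X_{1..n}) (j : nat) : nat := nth 0%N (multinom_val r) j.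

Definition unit_mnm (n j : nat) : 'X_{1..n} := [multinom (i == j :> nat) : nat | i < n].

Definition Xop (K : fieldType) (n j : nat) (p : Emod K n) : Emod K n :=
  \sum_(r <- msupp p)
     (if (0 < mexp r j)%N then p@_r *: 'X_[(r - unit_mnm n j)%MM] else 0).

Definition Dop (K : fieldType) (n j : nat) (p : Emod K n) : Emod K n :=
  \sum_(r <- msupp p)
     (p@_r * (- (mexp r j).+1%:R)) *: 'X_[(r + unit_mnm n j)%MM].

(* Koszul complex of N with respect to k commuting K-linear maps phi_0..phi_{k-1}:
   K_*(phi; N) = N (x) Lambda^* K^k, an element being a family indexed by subsets
   T of {0..k-1} (coefficient of e_T); it lies in degree i iff it is supported on
   subsets of size i.  The differential is
     d (x e_S) = \sum_{j in S} (-1)^{#{l in S | l < j}} phi_j(x) e_{S \ j}. *)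
Definition kchain (K : fieldType) (N : lmodType K) (k : nat) := {ffun {set 'I_k} -> N}.

Definition kdeg (K : fieldType) (N : lmodType K) (k : nat) (i : nat)
    (x : kchain N k) : Prop :=
  forall T : {set 'I_k}, #|T| != i -> x T = 0.

Definition kdiff (K : fieldType) (N : lmodType K) (k : nat) (phi : 'I_k -> N -> N)
    (x : kchain N k) : kchain N k :=
  [ffun T : {set 'I_k} =>
     \sum_(j : 'I_k | j \notin T)
        (-1) ^+ #|[set l in T | (l < j)%N]| *: phi j (x (j |: T))].

Definition koszul_H_vanish (K : fieldType) (N : lmodType K) (k : nat)
    (phi : 'I_k -> N -> N) (i : nat) : Prop :=
  forall x : kchain N k, kdeg i x -> kdiff phi x = 0 ->
    exists y : kchain N k, kdeg i.+1 y /\ kdiff phi y = x.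

(* 0-boundaries of K_*(phi;N), seen in K_0 = N (the coefficient of e_emptyset) *)
Definition koszul_B0 (K : fieldType) (N : lmodType K) (k : nat)
    (phi : 'I_k -> N -> N) (v : N) : Prop :=
  exists y : kchain N k, kdeg 1 y /\ kdiff phi y set0 = v.

(* The family d_c, ..., d_n on E_n (1-indexed), i.e. 0-indexed c-1, ..., n-1 *)
Definition dfamily (K : fieldType) (n c : nat) : 'I_(n - c).+1 -> Emod K n -> Emod K n :=
  fun t => @Dop K n (c.-1 + t).

(* In characteristic zero each d_j is injective on E_n, with left inverse L_j, and
   d_j L_j = 1 - P_j, where P_j is the projection onto the span of the basis elements
   with r_j = 0; for i <> j, d_i commutes with L_j and P_j.  For a family phi_0, ...,
   phi_(k-1) with such L_j, P_j, the map (h x)_T := P_0 ... P_(t-1) L_t x_(T\{t}),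
   t = min T, satisfies dh + hd = 1 - eps on the Koszul complex, where eps is
   P_0 ... P_(k-1) in degree 0 and vanishes elsewhere.  So the Koszul homology of
   d_c, ..., d_n vanishes in positive degrees, and the 0-boundaries are the kernel of
   P_c ... P_n, i.e. the elements with no basis vector having r_c = ... = r_n = 0.
   Forgetting the exponents r_c, ..., r_n maps E_n onto E_(c-1) with exactly this
   kernel, compatibly with X_j and d_j for j < c. *)

From HB Require Import structures.
From mathcomp Require Import all_boot all_order all_algebra zify.
From mathcomp Require Import bigenough ssrcomplements mpoly.
Set Implicit Arguments. Unset Strict Implicit. Unset Printing Implicit Defensive.
Import GRing.Theory BigEnough.
Local Open Scope ring_scope.

Section MReindex.
Variables (R : nzRingType) (n n' : nat) (a : 'X_{1..n} -> R) (s : 'X_{1..n} -> 'X_{1..n'}).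

Definition mreindex (p : {mpoly R[n]}) : {mpoly R[n']} :=
  \sum_(r <- msupp p) (p@_r * a r) *: 'X_[s r].

Lemma mreindexE (p : {mpoly R[n]}) i : (msize p <= i)%N ->
  mreindex p = \sum_(r : 'X_{1..n < i}) (p@_r * a r) *: 'X_[s r].
Proof.
move=> le_pi; rewrite /mreindex (big_mksub 'X_{1..n < i}) ?msupp_uniq //=; last first.
  by move=> r /msize_mdeg_lt /leq_trans; apply.
by rewrite big_rmcond //= => r /memN_msupp_eq0 ->; rewrite mul0r scale0r.
Qed.

Lemma mreindex_is_linear : linear mreindex.
Proof.
move=> c p q; pose_big_enough i.
  rewrite !(@mreindexE _ i) // scaler_sumr -big_split /=; apply: eq_bigr => r _.
  by rewrite mcoeffD mcoeffZ mulrDl scalerDl scalerA mulrA.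
by close.
Qed.

HB.instance Definition _ :=
  GRing.isLinear.Build R {mpoly R[n]} {mpoly R[n']} _ mreindex mreindex_is_linear.

Lemma mcoeff_mreindex (t : 'X_{1..n'} -> 'X_{1..n}) p m :
  (forall r, s r = m -> a r != 0 -> r = t m) ->
  (mreindex p)@_m = p@_(t m) * a (t m) * (s (t m) == m)%:R.
Proof.
move=> st; rewrite /mreindex raddf_sum /=.
rewrite (eq_bigr (fun r => (r == t m)%:R * (p@_(t m) * a (t m) * (s (t m) == m)%:R))).
  case: (boolP (t m \in msupp p)) => [tp|]; last first.
    by rewrite -mcoeff_eq0 => /eqP ->; rewrite !mul0r big1 // => r _; rewrite mulr0.
  by rewrite (bigD1_seq (t m)) //= eqxx mul1r big1 ?addr0 // => r /negbTE ->; rewrite mul0r.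
move=> r _; rewrite mcoeffZ mcoeffX; case: (eqVneq r (t m)) => [->|ne]; first by rewrite mul1r.
rewrite mul0r; case: (eqVneq (s r) m) => [srm|]; last by rewrite mulr0.
by case: (eqVneq (a r) 0) => [->|/(st r srm) rt]; [rewrite mulr0 mul0r|rewrite rt eqxx in ne].
Qed.
End MReindex.

Section Mexp.
Variable n : nat.
Implicit Types m : 'X_{1..n}.

Lemma mexp_ord m (i : 'I_n) : mexp m i = m i.
Proof. by rewrite /mexp (mnm_nth 0%N). Qed.

Lemma mexp_out m i : (n <= i)%N -> mexp m i = 0%N.
Proof. by move=> le_ni; rewrite /mexp nth_default // size_tuple. Qed.

Lemma mexp_multinom (E : 'I_n -> nat) i (lt_in : (i < n)%N) :
  mexp [multinom E j | j < n] i = E (Ordinal lt_in).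
Proof. by rewrite -[i]/(nat_of_ord (Ordinal lt_in)) mexp_ord mnmE. Qed.

Lemma mexpD m1 m2 i : mexp (m1 + m2)%MM i = (mexp m1 i + mexp m2 i)%N.
Proof.
case: (ltnP i n) => lt_in; last by rewrite !mexp_out.
by rewrite -[i]/(nat_of_ord (Ordinal lt_in)) !mexp_ord mnmDE.
Qed.

Lemma mexpB m1 m2 i : mexp (m1 - m2)%MM i = (mexp m1 i - mexp m2 i)%N.
Proof.
case: (ltnP i n) => lt_in; last by rewrite !mexp_out.
by rewrite -[i]/(nat_of_ord (Ordinal lt_in)) !mexp_ord mnmBE.
Qed.

Lemma mexp_unit j i : (j < n)%N -> mexp (unit_mnm n j) i = (i == j).
Proof.
move=> lt_jn; case: (ltnP i n) => [lt_in|le_ni].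
  by rewrite -[i]/(nat_of_ord (Ordinal lt_in)) mexp_ord mnmE.
by rewrite mexp_out //; case: eqP => // eq_ij; move: le_ni; rewrite eq_ij leqNgt lt_jn.
Qed.

Lemma mnm_mexpP m1 m2 : (forall i, (i < n)%N -> mexp m1 i = mexp m2 i) -> m1 = m2.
Proof. by move=> eq_m; apply/mnmP => i; rewrite -!mexp_ord eq_m. Qed.

End Mexp.

Ltac mexp_lia lt_jn :=
  apply: mnm_mexpP => ? _; rewrite ?(mexpD, mexpB, mexp_unit _ lt_jn);
  try (case: eqP => [->|_] /=; lia).

Lemma subm_unitK n (m : 'X_{1..n}) j : (j < n)%N ->
  ((m - unit_mnm n j + unit_mnm n j)%MM == m) = (0 < mexp m j)%N.
Proof.
move=> lt_jn; apply/eqP/idP => [/(congr1 (fun r => mexp r j))|m_j]; last by mexp_lia lt_jn.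
by rewrite mexpD mexpB mexp_unit // eqxx; lia.
Qed.

Section Operators.
Variables (K : fieldType) (n : nat).
Implicit Types (p : {mpoly K[n]}) (m : 'X_{1..n}).
Local Notation e_ j := (unit_mnm n j).

(* Since (-0)^-1 = 0, Lop j kills the basis elements with r_j = 0. *)
Definition Lop j : {mpoly K[n]} -> {mpoly K[n]} :=
  mreindex (fun r => (- (mexp r j)%:R)^-1) (fun r => r - e_ j)%MM.

Definition Pop j : {mpoly K[n]} -> {mpoly K[n]} :=
  mreindex (fun r => ((mexp r j == 0)%N)%:R) id.

HB.instance Definition _ j := GRing.Linear.copy (@Dop K n j)
  (mreindex (fun r => - (mexp r j).+1%:R) (fun r => r + e_ j)%MM).

Lemma mcoeff_Dop j p m : (j < n)%N ->
  (Dop j p)@_m = p@_(m - e_ j) * - (mexp m j)%:R.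
Proof.
move=> lt_jn; rewrite (mcoeff_mreindex (t := fun m => m - e_ j)%MM); last first.
  by move=> r <- _; rewrite addmK.
rewrite subm_unitK //; case: (posnP (mexp m j)) => [->|m_j]; first by rewrite oppr0 !mulr0.
by rewrite mulr1 mexpB mexp_unit // eqxx subn1 prednK.
Qed.

Lemma mcoeff_Xop j p m : (j < n)%N -> (Xop j p)@_m = p@_(m + e_ j).
Proof.
move=> lt_jn.
have -> : Xop j p = mreindex (fun r => ((0 < mexp r j)%N)%:R) (fun r => r - e_ j)%MM p.
  by apply: eq_bigr => r _; case: ifP => _; rewrite ?mulr1 ?mulr0 ?scale0r.
rewrite (mcoeff_mreindex (t := fun m => m + e_ j)%MM); last first.
  move=> r <- /=; case: (posnP (mexp r j)) => [_|r_j _]; first by rewrite eqxx.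
  by mexp_lia lt_jn.
by rewrite addmK eqxx mexpD mexp_unit // eqxx addn1 !mulr1.
Qed.

Lemma mcoeff_Lop j p m : (j < n)%N ->
  (Lop j p)@_m = p@_(m + e_ j) * (- (mexp m j).+1%:R)^-1.
Proof.
move=> lt_jn; rewrite (mcoeff_mreindex (t := fun m => m + e_ j)%MM); last first.
  move=> r <- /=; case: (posnP (mexp r j)) => [->|r_j _]; first by rewrite oppr0 invr0 eqxx.
  by mexp_lia lt_jn.
by rewrite addmK eqxx mexpD mexp_unit // eqxx addn1 mulr1.
Qed.

Lemma mcoeff_Pop j p m : (Pop j p)@_m = p@_m * ((mexp m j == 0)%N)%:R.
Proof. by rewrite (mcoeff_mreindex (t := id)) ?eqxx ?mulr1 // => r <-. Qed.

End Operators.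

Section Identities.
Variables (K : fieldType) (n : nat).
Hypothesis charK0 : [pchar K] =i pred0.
Implicit Types (p : {mpoly K[n]}) (m : 'X_{1..n}).
Local Notation e_ j := (unit_mnm n j).

Lemma opp_natS_neq0 k : (- k.+1%:R : K) != 0.
Proof. by rewrite oppr_eq0; move/pcharf0P: charK0 => ->. Qed.

Lemma Dop_Lop j p : (j < n)%N -> Dop j (Lop j p) = p - Pop j p.
Proof.
move=> lt_jn; apply/mpolyP => m; rewrite mcoeff_Dop // mcoeffB mcoeff_Pop mcoeff_Lop //.
case: (posnP (mexp m j)) => [->|m_j]; first by rewrite oppr0 !mulr0 mulr1 subrr.
have -> : (m - e_ j + e_ j)%MM = m by apply/eqP; rewrite subm_unitK.
rewrite mexpB mexp_unit // eqxx subn1 prednK // -mulrA mulVf ?mulr1 ?mulr0 ?subr0 //.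
by rewrite -(prednK m_j) opp_natS_neq0.
Qed.

Lemma DopK j : (j < n)%N -> cancel (@Dop K n j) (Lop j).
Proof.
move=> lt_jn p; apply/mpolyP => m; rewrite mcoeff_Lop // mcoeff_Dop // addmK.
by rewrite mexpD mexp_unit // eqxx addn1 -mulrA mulfV ?mulr1 // opp_natS_neq0.
Qed.

Lemma Pop_Dop j p : (j < n)%N -> Pop j (Dop j p) = 0.
Proof.
move=> lt_jn; apply/mpolyP => m; rewrite mcoeff_Pop mcoeff_Dop // mcoeff0.
by case: (posnP (mexp m j)) => [->|_]; rewrite ?oppr0 ?mulr0 ?mul0r.
Qed.

Lemma Dop_Lop_comm i j p : (i < n)%N -> (j < n)%N -> i != j ->
  Dop i (Lop j p) = Lop j (Dop i p).
Proof.
move=> lt_in lt_jn ne_ij; apply/mpolyP => m.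
rewrite mcoeff_Dop // !mcoeff_Lop // mcoeff_Dop // mexpD mexp_unit // (negbTE ne_ij) addn0.
rewrite mexpB mexp_unit // [j == i]eq_sym (negbTE ne_ij) subn0 mulrAC; congr (_@_ _ * _ * _).
by apply: mnm_mexpP => l _; rewrite !(mexpD, mexpB, mexp_unit _ lt_in, mexp_unit _ lt_jn); lia.
Qed.

Lemma Dop_Pop_comm i j p : (i < n)%N -> i != j -> Dop i (Pop j p) = Pop j (Dop i p).
Proof.
move=> lt_in ne_ij; apply/mpolyP => m; rewrite mcoeff_Dop // !mcoeff_Pop mcoeff_Dop //.
by rewrite mexpB mexp_unit // [j == i]eq_sym (negbTE ne_ij) subn0 mulrAC.
Qed.

End Identities.

Section KoszulContraction.
Variables (K : fieldType) (N : lmodType K) (k : nat) (D L P : nat -> {linear N -> N}).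
Hypotheses (DK : forall j, (j < k)%N -> cancel (D j) (L j))
  (DL : forall j v, (j < k)%N -> D j (L j v) = v - P j v)
  (PD : forall j v, (j < k)%N -> P j (D j v) = 0)
  (DL_comm : forall i j v, (i < k)%N -> (j < k)%N -> i != j -> D i (L j v) = L j (D i v))
  (DP_comm : forall i j v, (i < k)%N -> (j < k)%N -> i != j -> D i (P j v) = P j (D i v)).

Fixpoint Pcomp t : N -> N := if t is t'.+1 then Pcomp t' \o P t' else id.

Lemma Pcomp_is_linear t : linear (Pcomp t).
Proof. by elim: t => [|t IH] a u v //=; rewrite linearP IH. Qed.

HB.instance Definition _ t := GRing.isLinear.Build K N N _ (Pcomp t) (Pcomp_is_linear t).

Lemma Pcomp_D j t v : (j < t <= k)%N -> Pcomp t (D j v) = 0.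
Proof.
elim: t v => [|t IH] v /andP[]; rewrite ?ltnS // leq_eqVlt => /orP[/eqP->|lt_jt] lt_tk /=.
  by rewrite PD // linear0.
by rewrite -DP_comm ?(ltn_eqF lt_jt) ?(ltn_trans lt_jt) // IH // lt_jt ltnW.
Qed.

Lemma D_Pcomp j t v : (t <= j < k)%N -> D j (Pcomp t v) = Pcomp t (D j v).
Proof.
elim: t v => [|t IH] v /andP[le_tj lt_jk] //=.
by rewrite IH ?DP_comm ?(gtn_eqF le_tj) ?(ltnW le_tj) // (leq_ltn_trans _ lt_jk).
Qed.

Lemma D_Pcomp_L j v : (j < k)%N -> D j (Pcomp j (L j v)) = Pcomp j v - Pcomp j.+1 v.
Proof. by move=> lt_jk; rewrite D_Pcomp ?leqnn // DL // linearB. Qed.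

Lemma sum_Pcomp_telescope t v : (t <= k)%N ->
  \sum_(j < k | (j < t)%N) (Pcomp j v - Pcomp j.+1 v) = v - Pcomp t v.
Proof.
move=> le_tk; set F := fun j => Pcomp j v - Pcomp j.+1 v.
rewrite -(big_ord_widen _ F le_tk) -(big_mkord xpredT F) (telescope_sumr_eq (fun j => - Pcomp j v)).
- by rewrite opprK addrC.
- by [].
- by move=> j _; rewrite opprK addrC.
Qed.

Definition tmin (T : {set 'I_k}) : option 'I_k := [pick t in T | [forall l in T, (t <= l)%N]].

Variant tmin_spec (T : {set 'I_k}) : option 'I_k -> Type :=
  | TminNone of T = set0 : tmin_spec T None
  | TminSome t of t \in T & (forall l, l \in T -> (t <= l)%N) : tmin_spec T (Some t).

Lemma tminP (T : {set 'I_k}) : tmin_spec T (tmin T).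
Proof.
rewrite /tmin; case: pickP => [t /andP[tT /forall_inP min_t]|noT]; first exact: TminSome.
apply/TminNone/setP => j; rewrite inE; apply/negbTE/negP => jT.
have [t tT min_t] := arg_minnP (fun l : 'I_k => nat_of_ord l) jT.
have /negP[] := negbT (noT t).
by apply/andP; split; [exact: tT | apply/forall_inP].
Qed.

Lemma tmin_eq (T : {set 'I_k}) (t : 'I_k) :
  t \in T -> (forall l, l \in T -> (t <= l)%N) -> tmin T = Some t.
Proof.
move=> tT min_t; case: tminP => [T0|t' t'T min_t']; first by rewrite T0 inE in tT.
by congr Some; apply/val_inj/anti_leq; rewrite min_t' ?min_t.
Qed.

Definition ksign (T : {set 'I_k}) (j : 'I_k) : K := (-1) ^+ #|[set l in T | (l < j)%N]|.

Lemma ksign_min (T : {set 'I_k}) (j : 'I_k) :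
  (forall l, l \in T -> (j <= l)%N) -> ksign T j = 1.
Proof.
move=> min_j; rewrite /ksign (_ : [set l in T | _] = set0) ?cards0 //.
by apply/setP => l; rewrite !inE; apply/negbTE; apply/negP => /andP[/min_j]; lia.
Qed.

Lemma ksignD1 (T : {set 'I_k}) (t j : 'I_k) :
  t \in T -> (t < j)%N -> ksign T j = - ksign (T :\ t) j.
Proof.
move=> tT lt_tj; rewrite /ksign (_ : [set l in T | _] = t |: [set l in T :\ t | (l < j)%N]).
  by rewrite cardsU1 !inE eqxx /= exprS mulN1r.
by apply/setP => l; rewrite !inE; case: (eqVneq l t) => [->|] //=; rewrite tT lt_tj.
Qed.

Let phi (t : 'I_k) : N -> N := D t.

Lemma kdiffE (x : kchain N k) (T : {set 'I_k}) :
  kdiff phi x T = \sum_(j | j \notin T) ksign T j *: D j (x (j |: T)).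
Proof. by rewrite ffunE. Qed.

Definition khomotopy (x : kchain N k) : kchain N k :=
  [ffun T => if tmin T is Some t then Pcomp t (L t (x (T :\ t))) else 0].

Lemma khomotopy_deg i x : kdeg i x -> kdeg i.+1 (khomotopy x).
Proof.
move=> x_i T; rewrite ffunE; case: tminP => // t tT _ card_T.
rewrite x_i ?linear0 //; apply: contra card_T => /eqP card_Tt.
by rewrite (cardsD1 t T) tT card_Tt.
Qed.

Lemma khomotopyE x (T : {set 'I_k}) (t : 'I_k) :
  t \in T -> (forall l, l \in T -> (t <= l)%N) -> khomotopy x T = Pcomp t (L t (x (T :\ t))).
Proof. by move=> tT min_t; rewrite ffunE (tmin_eq tT min_t). Qed.

Lemma khomotopy0 : khomotopy 0 = 0.
Proof. by apply/ffunP => T; rewrite !ffunE; case: tmin => // t; rewrite ffunE !linear0. Qed.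

Lemma kdiff_khomotopy_set0 x : kdiff phi (khomotopy x) set0 = x set0 - Pcomp k (x set0).
Proof.
rewrite kdiffE -(sum_Pcomp_telescope (x set0) (leqnn k)).
apply: eq_big => [j|j _]; first by rewrite inE ltn_ord.
rewrite setU0 ksign_min ?scale1r; last by move=> l; rewrite inE.
by rewrite (@khomotopyE _ _ j) ?set11 ?setDv ?D_Pcomp_L // => l /set1P ->.
Qed.

Lemma Pcomp_L_D t j v : (j < t < k)%N -> Pcomp t (L t (D j v)) = 0.
Proof.
case/andP=> lt_jt lt_tk; rewrite -DL_comm ?(ltn_eqF lt_jt) ?(ltn_trans lt_jt) //.
by rewrite Pcomp_D // lt_jt (ltnW lt_tk).
Qed.

Section MinimalIndex.
Variables (x : kchain N k) (T : {set 'I_k}) (t : 'I_k).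
Hypotheses (tT : t \in T) (min_t : forall l, l \in T -> (t <= l)%N).

Lemma kdiff_khomotopy_term_lt (j : 'I_k) : (j < t)%N ->
  ksign T j *: D j (khomotopy x (j |: T)) = Pcomp j (x T) - Pcomp j.+1 (x T).
Proof.
move=> lt_jt; have jT : j \notin T by apply/negP => /min_t; lia.
have min_j l : l \in T -> (j <= l)%N by move/min_t; lia.
rewrite ksign_min // scale1r (@khomotopyE _ _ j) ?setU11 ?setU1K ?D_Pcomp_L //.
by move=> l /setU1P[->|/min_j].
Qed.

Lemma kdiff_khomotopy_term_gt (j : 'I_k) : j \notin T -> (t < j)%N ->
  ksign T j *: D j (khomotopy x (j |: T)) =
  - Pcomp t (L t (ksign (T :\ t) j *: D j (x (j |: T :\ t)))).
Proof.
move=> jT lt_tj; rewrite (@khomotopyE _ _ t) ?setU1r //; last first.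
  by move=> l /setU1P[->|/min_t] //; apply: ltnW.
have -> : (j |: T) :\ t = j |: (T :\ t).
  apply/setP => l; rewrite !inE; case: (eqVneq l j) => [->|//] /=.
  by rewrite -val_eqE /= gtn_eqF.
rewrite (ksignD1 tT lt_tj) !linearZ /= D_Pcomp ?(ltnW lt_tj) ?ltn_ord //.
by rewrite DL_comm ?(gtn_eqF lt_tj) // scaleNr scalerN.
Qed.

Lemma khomotopy_kdiff_term_min :
  Pcomp t (L t (ksign (T :\ t) t *: D t (x (t |: T :\ t)))) = Pcomp t (x T).
Proof.
rewrite ksign_min ?scale1r ?DK ?setD1K //.
by move=> l /setD1P[ne_lt /min_t].
Qed.

End MinimalIndex.

Lemma kdiff_khomotopy_nonempty x (T : {set 'I_k}) (t : 'I_k) :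
  t \in T -> (forall l, l \in T -> (t <= l)%N) ->
  kdiff phi (khomotopy x) T + khomotopy (kdiff phi x) T = x T.
Proof.
move=> tT min_t; rewrite kdiffE (khomotopyE _ tT min_t) kdiffE !linear_sum /=.
rewrite big_mkcond [X in _ + X]big_mkcond -big_split /=.
rewrite (eq_bigr (fun j : 'I_k => (if (j < t)%N then Pcomp j (x T) - Pcomp j.+1 (x T) else 0)
                                 + (if j == t then Pcomp t (x T) else 0))).
  by rewrite big_split -!big_mkcond big_pred1_eq (sum_Pcomp_telescope _ (ltnW (ltn_ord t))) /= subrK.
move=> j _; case: (ltngtP j t) => [lt_jt|lt_tj|/val_inj eq_jt].
- have jT : j \notin T by apply/negP => /min_t; lia.
  have ne_jt : (j == t) = false by rewrite -val_eqE /= ltn_eqF.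
  rewrite (kdiff_khomotopy_term_lt _ tT min_t lt_jt) !linearZZ /= Pcomp_L_D ?lt_jt ?ltn_ord //= scaler0.
  by rewrite jT in_setD1 (negbTE jT) andbF ne_jt /= !addr0.
- have ne_jt : (j == t) = false by rewrite -val_eqE /= gtn_eqF.
  rewrite ne_jt in_setD1 ne_jt /= addr0.
  case: (boolP (j \in T)) => jT //=; first by rewrite addr0.
  by rewrite (kdiff_khomotopy_term_gt _ tT min_t jT lt_tj) addNr.
- by rewrite eq_jt tT setD11 eqxx /= !add0r khomotopy_kdiff_term_min.
Qed.

Lemma koszul_H_vanish_contraction i : (0 < i)%N -> koszul_H_vanish phi i.
Proof.
move=> i_gt0 x x_i dx0; exists (khomotopy x); split; first exact: khomotopy_deg x_i.
apply/ffunP => T; case: (tminP T) => [->|t tT min_t].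
  have x0 : x set0 = 0 by apply: x_i; rewrite cards0 eq_sym -lt0n.
  by rewrite kdiff_khomotopy_set0 x0 linear0 subr0.
by rewrite -[RHS](kdiff_khomotopy_nonempty _ tT min_t) dx0 khomotopy0 [X in _ + X]ffunE addr0.
Qed.

Lemma koszul_B0_contraction v : koszul_B0 phi v <-> Pcomp k v = 0.
Proof.
split=> [[y [_ <-]]|v_k].
  rewrite kdiffE linear_sum big1 // => j _.
  by rewrite linearZ /= Pcomp_D ?scaler0 // ltn_ord leqnn.
pose x : kchain N k := [ffun T => if T == set0 then v else 0].
have x_0 : kdeg 0 x by move=> T; rewrite ffunE cards_eq0 => /negbTE ->.
exists (khomotopy x); split; first exact: khomotopy_deg x_0.
by rewrite kdiff_khomotopy_set0 ffunE eqxx v_k subr0.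
Qed.

End KoszulContraction.

Section Truncation.
Variables (K : fieldType) (n c' : nat).
Hypothesis le_cn : (c' <= n)%N.

Definition mtrunc (m : 'X_{1..n}) : 'X_{1..c'} := [multinom mexp m i | i < c'].
Definition mext (m : 'X_{1..c'}) : 'X_{1..n} := [multinom mexp m i | i < n].
Definition mtail0 (m : 'X_{1..n}) : bool :=
  [forall i : 'I_n, (c' <= i)%N ==> (mexp m i == 0%N)].

Lemma mexp_mtrunc m i : mexp (mtrunc m) i = if (i < c')%N then mexp m i else 0%N.
Proof. by case: ltnP => lt_ic; [rewrite mexp_multinom | rewrite mexp_out]. Qed.

Lemma mexp_mext m i : (i < n)%N -> mexp (mext m) i = mexp m i.
Proof. by move=> lt_in; rewrite mexp_multinom. Qed.

Lemma mtail0P m : reflect (forall i, (c' <= i)%N -> mexp m i = 0%N) (mtail0 m).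
Proof.
apply: (iffP forallP) => [m0 i le_ci|m0 i]; last by apply/implyP => /m0 ->.
case: (ltnP i n) => [lt_in|]; last exact: mexp_out.
by have /implyP/(_ le_ci)/eqP := m0 (Ordinal lt_in).
Qed.

Lemma mtruncK : cancel mext mtrunc.
Proof.
move=> m; apply: mnm_mexpP => i lt_ic.
by rewrite mexp_mtrunc lt_ic mexp_mext // (leq_trans lt_ic le_cn).
Qed.

Lemma mextK m : mtail0 m -> mext (mtrunc m) = m.
Proof.
move/mtail0P => m0; apply: mnm_mexpP => i lt_in; rewrite mexp_mext // mexp_mtrunc.
by case: ltnP => // /m0 ->.
Qed.

Lemma mtail0_mext m : mtail0 (mext m).
Proof.
apply/mtail0P => i le_ci; case: (ltnP i n) => [lt_in|]; last exact: mexp_out.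
by rewrite mexp_mext // mexp_out.
Qed.

Definition Etrunc : {mpoly K[n]} -> {mpoly K[c']} :=
  mreindex (fun r => (mtail0 r)%:R) mtrunc.

Lemma mcoeff_Etrunc p m : (Etrunc p)@_m = p@_(mext m).
Proof.
rewrite (mcoeff_mreindex (t := mext)) ?mtail0_mext ?mtruncK ?eqxx ?mulr1 //.
by move=> r <-; case: (boolP (mtail0 r)) => [/mextK -> //|_]; rewrite eqxx.
Qed.

Lemma Etrunc_surj (w : {mpoly K[c']}) : exists v, Etrunc v = w.
Proof.
exists (mreindex (fun=> 1) mext w); apply/mpolyP => m.
rewrite mcoeff_Etrunc (mcoeff_mreindex (t := mtrunc)) ?mtruncK ?eqxx ?mulr1 //.
by move=> r /(congr1 mtrunc); rewrite !mtruncK.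
Qed.

Lemma mext_unit_mnm j : (j < c')%N -> mext (unit_mnm c' j) = unit_mnm n j.
Proof.
move=> lt_jc; have lt_jn := leq_trans lt_jc le_cn.
by apply: mnm_mexpP => i lt_in; rewrite mexp_mext // !mexp_unit.
Qed.

Lemma Etrunc_Xop j v : (j < c')%N -> Etrunc (Xop j v) = Xop j (Etrunc v).
Proof.
move=> lt_jc; have lt_jn := leq_trans lt_jc le_cn.
apply/mpolyP => m; rewrite mcoeff_Etrunc !mcoeff_Xop // mcoeff_Etrunc; congr (_@_ _).
by apply: mnm_mexpP => i lt_in; rewrite mexpD -mext_unit_mnm // !mexp_mext // mexpD.
Qed.

Lemma Etrunc_Dop j v : (j < c')%N -> Etrunc (Dop j v) = Dop j (Etrunc v).
Proof.
move=> lt_jc; have lt_jn := leq_trans lt_jc le_cn.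
apply/mpolyP => m; rewrite mcoeff_Etrunc !mcoeff_Dop // mcoeff_Etrunc mexp_mext //.
congr (_@_ _ * _).
by apply: mnm_mexpP => i lt_in; rewrite mexpB -mext_unit_mnm // !mexp_mext // mexpB.
Qed.

End Truncation.

Section DerivationFamily.
Variables (K : fieldType) (n c' k : nat).
Hypotheses (charK0 : [pchar K] =i pred0) (n_eq : (c' + k)%N = n).

Let D j : {linear Emod K n -> Emod K n} := GRing.Linear.clone _ _ _ _ (@Dop K n (c' + j)) _.
Let L j : {linear Emod K n -> Emod K n} := GRing.Linear.clone _ _ _ _ (@Lop K n (c' + j)) _.
Let P j : {linear Emod K n -> Emod K n} := GRing.Linear.clone _ _ _ _ (@Pop K n (c' + j)) _.

Lemma mcoeff_Pcomp t v m :
  (Pcomp P t v)@_m = v@_m * \prod_(j < t) ((mexp m (c' + j) == 0)%N)%:R.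
Proof.
elim: t v => [|t IH] v; first by rewrite big_ord0 mulr1.
by rewrite /= IH mcoeff_Pop big_ord_recr /= mulrAC -mulrA.
Qed.

Let le_cn : (c' <= n)%N. Proof. by rewrite -n_eq leq_addr. Qed.

Lemma mcoeff_Pcomp_tail v m : (Pcomp P k v)@_m = if mtail0 c' m then v@_m else 0.
Proof.
rewrite mcoeff_Pcomp; case: ifPn => [/mtail0P m0|].
  by rewrite big1 ?mulr1 // => j _; rewrite m0 ?leq_addr.
rewrite negb_forall => /existsP[i]; rewrite negb_imply => /andP[le_ci m_i].
have lt_ik : (i - c' < k)%N by rewrite ltn_subLR // n_eq.
by rewrite (bigD1 (Ordinal lt_ik)) //= subnKC // (negbTE m_i) mul0r mulr0.
Qed.

Lemma Etrunc_eq0 v : Etrunc c' v = 0 <-> Pcomp P k v = 0.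
Proof.
split=> [v0|v_k]; apply/mpolyP => m; rewrite mcoeff0.
  rewrite mcoeff_Pcomp_tail; case: ifP => // /mextK <-.
  by rewrite -mcoeff_Etrunc // v0 mcoeff0.
by have := congr1 (mcoeff (mext n m)) v_k; rewrite mcoeff_Pcomp_tail mtail0_mext mcoeff0 mcoeff_Etrunc.
Qed.

Let lt_shift j : (j < k)%N -> (c' + j < n)%N.
Proof. by rewrite -n_eq ltn_add2l. Qed.

Let DK j : (j < k)%N -> cancel (D j) (L j).
Proof. by move/lt_shift; apply: DopK. Qed.

Let DL j v : (j < k)%N -> D j (L j v) = v - P j v.
Proof. by move/lt_shift/(Dop_Lop charK0); apply. Qed.

Let PD j v : (j < k)%N -> P j (D j v) = 0.
Proof. by move/lt_shift/Pop_Dop; apply. Qed.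

Let DL_comm i j v : (i < k)%N -> (j < k)%N -> i != j -> D i (L j v) = L j (D i v).
Proof. by move=> /lt_shift lt_i /lt_shift lt_j ne_ij; apply: Dop_Lop_comm; rewrite ?eqn_add2l. Qed.

Let DP_comm i j v : (i < k)%N -> (j < k)%N -> i != j -> D i (P j v) = P j (D i v).
Proof. by move=> /lt_shift lt_i _ ne_ij; apply: Dop_Pop_comm; rewrite ?eqn_add2l. Qed.

Lemma koszul_H_vanish_Dop i : (0 < i)%N ->
  koszul_H_vanish (fun t : 'I_k => @Dop K n (c' + t)) i.
Proof. exact: (koszul_H_vanish_contraction DK DL PD DL_comm DP_comm). Qed.

Lemma koszul_B0_Dop v :
  koszul_B0 (fun t : 'I_k => @Dop K n (c' + t)) v <-> Etrunc c' v = 0.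
Proof. by rewrite Etrunc_eq0; exact: (koszul_B0_contraction DL PD DP_comm). Qed.

End DerivationFamily.

Theorem lemma2p2 (K : fieldType) (charK0 : [pchar K] =i pred0) (n c : nat)
    (hc1 : (1 <= c)%N) (hcn : (c <= n)%N) :
  (forall i : nat, (0 < i)%N -> koszul_H_vanish (@dfamily K n c) i) /\
  (exists f : {linear Emod K n -> Emod K c.-1},
     (forall w : Emod K c.-1, exists v : Emod K n, f v = w) /\
     (forall v : Emod K n, f v = 0 <-> koszul_B0 (@dfamily K n c) v) /\
     (forall (j : nat) (v : Emod K n), (j < c.-1)%N ->
        f (@Xop K n j v) = @Xop K c.-1 j (f v) /\
        f (@Dop K n j v) = @Dop K c.-1 j (f v))).
Proof.
have n_eq : (c.-1 + (n - c).+1)%N = n by lia.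
have le_cn : (c.-1 <= n)%N by lia.
split=> [i|]; first exact: koszul_H_vanish_Dop.
exists (GRing.Linear.clone _ _ _ _ (@Etrunc K n c.-1) _).
split; first exact: Etrunc_surj.
split=> [v|j v lt_jc]; first by rewrite (koszul_B0_Dop charK0 n_eq).
by split; [apply: Etrunc_Xop | apply: Etrunc_Dop].
Qed.
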